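(* Let $0<d<\pi/2$, $\mathscr{D}_d=\{\zeta\in\mathbb{C}:|\Im\zeta|<d\}$, $\psi(t)=\operatorname{arcsinh}(e^t)$. Assume $f$ is analytic on $\psi(\mathscr{D}_d)$ and there are constants $K,\alpha,\beta>0$ with $|f(z)|\le K\left|\left(\frac{z}{1+z}\right)^{\alpha-1}e^{-\beta z}\right|$ for all $z\in\psi(\mathscr{D}_d)$. Then $F(\zeta)=f(\psi(\zeta))\psi'(\zeta)$ belongs to $\mathbf{L}^{\mathrm{SE}}_{L,R,\alpha,\beta}(\mathscr{D}_d)$ with $L=2^{\beta/2}c_{\alpha,d}K$ and $R=2^{(1-\alpha+|1-\alpha|)/2}K$, where $c_{\alpha,d}=\{2(1+1/\cos d)\}^{(1-\alpha)/2}$ if $0<\alpha<1$ and $c_{\alpha,d}=2^{(\alpha-1)/2}$ if $\alpha\ge1$.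
   Context: For positive $L,R,\alpha,\beta$ and $0<d<\pi/2$, $\mathbf{L}^{\mathrm{SE}}_{L,R,\alpha,\beta}(\mathscr{D}_d)$ is the set of functions $F$ analytic on $\mathscr{D}_d$ such that for all $\zeta\in\mathscr{D}_d$, $|F(\zeta)|\le L\,|1+e^{-2\zeta}|^{-\alpha/2}|1+e^{2\zeta}|^{-\beta/2}$, and for all $x\in\mathbb{R}$, $|F(x)|\le R\,(1+e^{-2x})^{-\alpha/2}(1+e^{2x})^{-\beta/2}$. Here $\psi'(\zeta)=e^{\zeta}/\sqrt{1+e^{2\zeta}}$; complex functions use principal branches. *)

From Stdlib Require Import Reals Lra.
From Coquelicot Require Import Coquelicot.
Open Scope R_scope.

Definition Cexp (z : C) : C :=
  (exp (Re z) * cos (Im z), exp (Re z) * sin (Im z)).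

Definition Arg (z : C) : R :=
  let x := Re z in let y := Im z in
  if Rlt_dec 0 x then atan (y / x)
  else if Rlt_dec x 0 then
    (if Rle_dec 0 y then atan (y / x) + PI else atan (y / x) - PI)
  else if Rlt_dec 0 y then PI / 2
  else if Rlt_dec y 0 then - (PI / 2)
  else 0.

(** Principal logarithm (only meaningful for z <> 0). *)
Definition Clog (z : C) : C := (ln (Cmod z), Arg z).

(** Principal (complex-exponent) power z^w = exp (w Log z), with the convention 0^w = 0. *)
Definition Cpowp (z w : C) : C :=
  if Ceq_dec z 0 then 0%C else Cexp (w * Clog z)%C.

Definition Csqrt (z : C) : C := Cpowp z (RtoC (1/2)).

Definition Casinh (w : C) : C := Clog (w + Csqrt (w * w + 1))%C.

(** psi(t) = arcsinh(e^t) and psi'(t) = e^t / sqrt(1 + e^{2t}). *)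
Definition psi (t : C) : C := Casinh (Cexp t).
Definition dpsi (t : C) : C := (Cexp t / Csqrt (1 + Cexp (2 * t)))%C.

Definition strip (d : R) (zeta : C) : Prop := Rabs (Im zeta) < d.

Definition psi_strip (d : R) (z : C) : Prop :=
  exists zeta, strip d zeta /\ z = psi zeta.

Definition analytic_on (S : C -> Prop) (f : C -> C) : Prop :=
  forall z, S z -> @ex_derive C_AbsRing C_NormedModule f z.

Definition LSE (L Rc alpha beta d : R) (F : C -> C) : Prop :=
  analytic_on (strip d) F /\
  (forall zeta, strip d zeta ->
     Cmod (F zeta) <=
       L * Rpower (Cmod (1 + Cexp (- (2 * zeta)))%C) (- alpha / 2)
         * Rpower (Cmod (1 + Cexp (2 * zeta))%C) (- beta / 2)) /\
  (forall x : R,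
     Cmod (F (RtoC x)) <=
       Rc * Rpower (1 + exp (- (2 * x))) (- alpha / 2)
          * Rpower (1 + exp (2 * x)) (- beta / 2)).

Definition c_const (alpha d : R) : R :=
  if Rlt_dec alpha 1 then Rpower (2 * (1 + 1 / cos d)) ((1 - alpha) / 2)
  else Rpower 2 ((alpha - 1) / 2).

From Stdlib Require Import Reals Lra Psatz.
From Coquelicot Require Import Coquelicot.
Open Scope R_scope.

(* With w = e^zeta and s = sqrt (1 + w^2), the point z = psi zeta = Log (w + s) satisfies
   e^z = w + s and e^(-z) = s - w, i.e. w = sinh z and s = cosh z.  Hence
   F zeta = f z * sinh z / cosh z, |1 + e^(2 zeta)| = |cosh z|^2 and
   |1 + e^(-2 zeta)| = |cosh z|^2 / |sinh z|^2.  Writing z = a + i b, one has a > 0, |b| < pi/2,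
   |sinh z|^2 = sinh^2 a + sin^2 b and |cosh z|^2 = sinh^2 a + cos^2 b <= e^(2a).  So the factor
   e^(-beta a) of the hypothesis is absorbed by |cosh z|^(-beta), and the estimate reduces to
   bounding the ratio |z| |cosh z| / (|1 + z| |sinh z|) from above (alpha >= 1) or from below
   (alpha < 1).  Both bounds are elementary inequalities in a and b, resting on
   tanh a <= a <= (1 + a) tanh a, |b| cos b <= |sin b| <= |b| and, on the strip,
   |cosh z|^2 >= cos d (1 + |sinh z|^2).
   Analyticity holds because exp, Log and sqrt are complex differentiable at the points where they
   are used (Log and sqrt only see arguments or values in the right half-plane); each derivative
   is obtained from a quadratic bound on the remainder. *)

Lemma C_ext (z w : C) : Re z = Re w -> Im z = Im w -> z = w.
Proof. destruct z, w; simpl; intros; subst; reflexivity. Qed.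

Lemma Re_le_Cmod (z : C) : Re z <= Cmod z.
Proof. pose proof (re_le_Cmod z); pose proof (Rle_abs (Re z)); lra. Qed.

Lemma Im_le_Cmod (z : C) : Rabs (Im z) <= Cmod z.
Proof.
  destruct z as [x y]. rewrite <- sqrt_Rsqr_abs. unfold Cmod. apply sqrt_le_1_alt.
  unfold Rsqr. simpl. nra.
Qed.

Lemma Cmod_le_Re_Im (z : C) : Cmod z <= Rabs (Re z) + Rabs (Im z).
Proof.
  destruct z as [x y]. unfold Cmod, Re, Im. cbn [fst snd].
  pose proof (Rabs_pos x). pose proof (Rabs_pos y).
  rewrite <- (sqrt_square (Rabs x + Rabs y)) by lra.
  apply sqrt_le_1_alt. rewrite <- (pow2_abs x), <- (pow2_abs y). nra.
Qed.

Lemma Re_pos_neq0 (z : C) : 0 < Re z -> z <> 0%C.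
Proof. intros H ->. simpl in H. lra. Qed.

Lemma Cmod_dist_ge (y z : C) : Cmod z - Cmod (y - z) <= Cmod y.
Proof.
  pose proof (Cmod_triangle y (z - y)) as H.
  replace (y + (z - y))%C with z in H by ring.
  rewrite <- (Cmod_opp (z - y)) in H. replace (- (z - y))%C with (y - z)%C in H by ring.
  lra.
Qed.

Lemma Cexp_add (a b : C) : Cexp (a + b) = (Cexp a * Cexp b)%C.
Proof.
  destruct a as [x y], b as [u v]. unfold Cexp. simpl.
  rewrite exp_plus, cos_plus, sin_plus. apply C_ext; simpl; ring.
Qed.

Lemma Cexp_0 : Cexp 0 = 1%C.
Proof. unfold Cexp. simpl. rewrite exp_0, cos_0, sin_0. apply C_ext; simpl; ring. Qed.

Lemma Cmod_Cexp (z : C) : Cmod (Cexp z) = exp (Re z).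
Proof.
  destruct z as [x y]. unfold Cmod, Cexp. simpl.
  replace (_ + _) with (exp x ^ 2).
  - apply sqrt_pow2. left; apply exp_pos.
  - pose proof (sin2_cos2 y) as H. unfold Rsqr in H.
    transitivity (exp x ^ 2 * (sin y * sin y + cos y * cos y)); [rewrite H|]; ring.
Qed.

Lemma Cexp_neq0 (z : C) : Cexp z <> 0%C.
Proof. apply Cmod_gt_0. rewrite Cmod_Cexp. apply exp_pos. Qed.

Lemma Cexp_opp (z : C) : Cexp (- z) = (/ Cexp z)%C.
Proof.
  assert (H : (Cexp (- z) * Cexp z)%C = 1%C)
    by (rewrite <- Cexp_add, <- Cexp_0; f_equal; ring).
  pose proof (Cexp_neq0 z).
  transitivity (Cexp (- z) * Cexp z * / Cexp z)%C; [field | rewrite H; ring]; auto.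
Qed.

Lemma Cexp_double (z : C) : Cexp (2 * z) = (Cexp z * Cexp z)%C.
Proof. rewrite <- Cexp_add. f_equal. ring. Qed.

Lemma Arg_Re_pos (z : C) : 0 < Re z -> Arg z = atan (Im z / Re z).
Proof. intros H. unfold Arg. destruct (Rlt_dec 0 (Re z)); [reflexivity | lra]. Qed.

Lemma Arg_bound (z : C) : - PI <= Arg z <= PI.
Proof.
  pose proof PI_RGT_0. pose proof (atan_bound (Im z / Re z)).
  unfold Arg. destruct (Rlt_dec 0 (Re z)); [lra|].
  destruct (Rlt_dec (Re z) 0).
  - destruct (Rle_dec 0 (Im z)).
    + assert (atan (Im z / Re z) <= atan 0).
      { destruct (Req_dec (Im z) 0) as [->|].
        - rewrite Rdiv_0_l. lra.
        - left. apply atan_increasing, Rdiv_pos_neg; lra. }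
      rewrite atan_0 in *. lra.
    + assert (atan 0 < atan (Im z / Re z)) by (apply atan_increasing, Rdiv_neg_neg; lra).
      rewrite atan_0 in *. lra.
  - destruct (Rlt_dec 0 (Im z)); [lra|]. destruct (Rlt_dec (Im z) 0); lra.
Qed.

Lemma Cexp_Clog (z : C) : z <> 0%C -> Cexp (Clog z) = z.
Proof.
  intros Hz. pose proof (proj1 (Cmod_gt_0 z) Hz) as Hm.
  unfold Clog, Cexp. cbn [Re Im fst snd]. rewrite exp_ln by exact Hm.
  destruct z as [x y]. unfold Arg, Cmod. cbn [Re Im fst snd].
  assert (Hfac : x <> 0 -> sqrt (x ^ 2 + y ^ 2) = Rabs x * sqrt (1 + (y / x)²)).
  { intros Hx. rewrite <- sqrt_Rsqr_abs, <- sqrt_mult by (unfold Rsqr; nra).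
    f_equal. unfold Rsqr. field. exact Hx. }
  assert (Hs : 0 < sqrt (1 + (y / x)²)) by (apply sqrt_lt_R0; pose proof (Rle_0_sqr (y / x)); lra).
  destruct (Rlt_dec 0 x).
  - rewrite Hfac, Rabs_pos_eq, cos_atan, sin_atan by lra.
    apply C_ext; simpl; field; lra.
  - destruct (Rlt_dec x 0).
    + rewrite Hfac, Rabs_left by lra.
      destruct (Rle_dec 0 y).
      * rewrite neg_cos, neg_sin, cos_atan, sin_atan. apply C_ext; simpl; field; lra.
      * rewrite cos_minus, sin_minus, cos_PI, sin_PI, cos_atan, sin_atan.
        apply C_ext; simpl; field; lra.
    + assert (x = 0) by lra. subst x.
      replace (0 ^ 2 + y ^ 2) with (Rabs y * Rabs y) by (rewrite <- Rabs_mult, Rabs_pos_eq; nra).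
      rewrite sqrt_square by apply Rabs_pos.
      destruct (Rlt_dec 0 y).
      * rewrite Rabs_pos_eq, cos_PI2, sin_PI2 by lra. apply C_ext; simpl; ring.
      * destruct (Rlt_dec y 0).
        -- rewrite Rabs_left, cos_neg, sin_neg, cos_PI2, sin_PI2 by lra. apply C_ext; simpl; ring.
        -- exfalso. apply Hz. apply C_ext; simpl; lra.
Qed.

Lemma Csqrt_sq (z : C) : (Csqrt z * Csqrt z)%C = z.
Proof.
  unfold Csqrt, Cpowp. destruct (Ceq_dec z 0) as [->|Hz].
  - apply C_ext; simpl; ring.
  - rewrite <- Cexp_add. transitivity (Cexp (Clog z)); [|exact (Cexp_Clog z Hz)].
    f_equal. apply C_ext; simpl; field.
Qed.

Lemma Csqrt_Re_nonneg (z : C) : 0 <= Re (Csqrt z).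
Proof.
  unfold Csqrt, Cpowp. destruct (Ceq_dec z 0); simpl; [lra|].
  apply Rmult_le_pos; [left; apply exp_pos|].
  pose proof (Arg_bound z). apply cos_ge_0; lra.
Qed.

Lemma Cmod_Cpowp_real (z : C) (x : R) : z <> 0%C -> Cmod (Cpowp z x) = Rpower (Cmod z) x.
Proof.
  intros Hz. unfold Cpowp. destruct (Ceq_dec z 0); [contradiction|].
  rewrite Cmod_Cexp. unfold Rpower. f_equal. simpl. ring.
Qed.

Lemma MVT_abs_le_0 (f f' : R -> R) (x B : R) :
  (forall c, derivable_pt_lim f c (f' c)) ->
  (forall c, Rabs c <= Rabs x -> Rabs (f' c) <= B) ->
  Rabs (f x - f 0) <= B * Rabs x.
Proof.
  intros Hd HB. destruct (MVT_abs f f' 0 x (fun c _ => Hd c)) as [c [-> Hc]].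
  rewrite Rminus_0_r. apply Rmult_le_compat_r; [apply Rabs_pos|]. apply HB.
  revert Hc. unfold Rmin, Rmax. intros Hc. apply Rabs_le.
  destruct (Rle_dec 0 x); [rewrite Rabs_pos_eq | rewrite Rabs_left]; lra.
Qed.

Lemma sin_abs_le (y : R) : Rabs (sin y) <= Rabs y.
Proof.
  pose proof (MVT_abs_le_0 sin cos y 1 derivable_pt_lim_sin) as H.
  rewrite sin_0, Rminus_0_r, Rmult_1_l in H. apply H.
  intros c _. apply Rabs_le, COS_bound.
Qed.

Lemma cos_sub_1_le (y : R) : Rabs (cos y - 1) <= y ^ 2.
Proof.
  pose proof (MVT_abs_le_0 cos (fun t => - sin t) y (Rabs y) derivable_pt_lim_cos) as H.
  rewrite cos_0 in H. rewrite <- pow2_abs. simpl. rewrite Rmult_1_r.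
  apply H. intros c Hc. rewrite Rabs_Ropp. pose proof (sin_abs_le c). lra.
Qed.

Lemma sin_sub_id_le (y : R) : Rabs y <= 1 -> Rabs (sin y - y) <= y ^ 2.
Proof.
  intros Hy.
  pose proof (MVT_abs_le_0 (fun t => sin t - t) (fun t => cos t - 1) y (y ^ 2)) as H.
  cbv beta in H. rewrite sin_0, !Rminus_0_r in H.
  eapply Rle_trans; [apply H|].
  - intros c. apply is_derive_Reals. auto_derive; [exact I | ring].
  - intros c Hc. eapply Rle_trans; [apply cos_sub_1_le|].
    rewrite <- (pow2_abs c), <- (pow2_abs y). pose proof (Rabs_pos c). nra.
  - rewrite <- (pow2_abs y). pose proof (Rabs_pos y). nra.
Qed.

Lemma exp_sub_1_le (x : R) : Rabs x <= 1 -> Rabs (exp x - 1) <= 3 * Rabs x.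
Proof.
  intros Hx. pose proof (MVT_abs_le_0 exp exp x 3 derivable_pt_lim_exp) as H.
  rewrite exp_0 in H. apply H. intros c Hc.
  rewrite Rabs_pos_eq by (left; apply exp_pos).
  eapply Rle_trans; [|apply exp_le_3].
  destruct (Req_dec c 1) as [->|Hc1]; [lra|].
  left. apply exp_increasing. apply Rabs_le_between in Hc. lra.
Qed.

Lemma exp_sub_1_sub_id_le (x : R) : Rabs x <= 1 -> Rabs (exp x - 1 - x) <= 3 * x ^ 2.
Proof.
  intros Hx.
  pose proof (MVT_abs_le_0 (fun t => exp t - t) (fun t => exp t - 1) x (3 * Rabs x)) as H.
  cbv beta in H. rewrite exp_0, Rminus_0_r in H.
  replace (exp x - 1 - x) with (exp x - x - 1) by ring.
  rewrite <- pow2_abs. simpl. rewrite Rmult_1_r, <- Rmult_assoc.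
  apply H.
  - intros c. apply is_derive_Reals. auto_derive; [exact I | ring].
  - intros c Hc. eapply Rle_trans; [apply exp_sub_1_le; lra | lra].
Qed.

Lemma Cexp_sub_1_sub_id_le (k : C) : Cmod k <= 1 -> Cmod (Cexp k - 1 - k) <= 8 * Cmod k ^ 2.
Proof.
  intros Hk. rewrite Cmod2_alt.
  pose proof (Im_le_Cmod k) as Hy1. pose proof (re_le_Cmod k) as Hx1.
  destruct k as [x y]. unfold Re, Im in *. cbn [fst snd] in *.
  eapply Rle_trans; [apply Cmod_le_Re_Im|].
  unfold Cexp; cbn [fst snd Re Im Cminus Cplus Copp RtoC].
  pose proof (exp_sub_1_sub_id_le x ltac:(lra)) as Ex.
  pose proof (cos_sub_1_le y) as Ec.
  pose proof (sin_sub_id_le y ltac:(lra)) as Es.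
  pose proof (sin_abs_le y) as Es'.
  assert (Hc : Rabs (cos y) <= 1) by apply Rabs_le, COS_bound.
  assert (H1x : Rabs (1 + x) <= 2) by (apply Rabs_le; apply Rabs_le_between in Hx1; lra).
  pose proof (Rabs_pos x). pose proof (Rabs_pos y). pose proof (Rabs_pos (sin y)).
  pose proof (Rabs_pos (cos y)). pose proof (Rabs_pos (exp x - 1 - x)).
  rewrite <- (pow2_abs x), <- (pow2_abs y) in *.
  replace (exp x * cos y + - (1) + - x) with ((exp x - 1 - x) * cos y + (1 + x) * (cos y - 1)) by ring.
  replace (exp x * sin y + - 0 + - y) with ((exp x - 1 - x) * sin y + x * sin y + (sin y - y)) by ring.
  pose proof (Rabs_triang ((exp x - 1 - x) * cos y) ((1 + x) * (cos y - 1))).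
  pose proof (Rabs_triang ((exp x - 1 - x) * sin y + x * sin y) (sin y - y)).
  pose proof (Rabs_triang ((exp x - 1 - x) * sin y) (x * sin y)).
  rewrite !Rabs_mult in *.
  pose proof (Rabs_pos (1 + x)). pose proof (Rabs_pos (cos y - 1)).
  assert (Rabs (sin y) <= 1) by lra.
  assert (Rabs (exp x - 1 - x) * Rabs (cos y) <= 3 * Rabs x ^ 2 * 1)
    by (apply Rmult_le_compat; lra).
  assert (Rabs (1 + x) * Rabs (cos y - 1) <= 2 * Rabs y ^ 2) by nra.
  assert (Rabs (exp x - 1 - x) * Rabs (sin y) <= 3 * Rabs x ^ 2 * 1)
    by (apply Rmult_le_compat; lra).
  assert (Rabs x * Rabs (sin y) <= Rabs x * Rabs y) by (apply Rmult_le_compat_l; lra).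
  pose proof (pow2_ge_0 (Rabs x - Rabs y)).
  lra.
Qed.

(** * Complex derivatives *)

Notation is_Cderive f z l := (@is_derive C_AbsRing C_NormedModule f z l).
Notation ex_Cderive f z := (@ex_derive C_AbsRing C_NormedModule f z).

Lemma is_Cderive_of_remainder_le (f : C -> C) (z l : C) (r M : R) :
  0 < r ->
  (forall y, Cmod (y - z) < r -> Cmod (f y - f z - (y - z) * l) <= M * Cmod (y - z) ^ 2) ->
  is_Cderive f z l.
Proof.
  intros Hr Hrem. split; [apply is_linear_scal_l|].
  intros x Hx.
  rewrite <- (@is_filter_lim_locally_unique C_AbsRing (AbsRing_NormedModule C_AbsRing) _ _ Hx).
  intros eps. pose proof (cond_pos eps) as Heps. pose proof (Rabs_pos M).
  assert (Hdel : 0 < Rmin r (eps / (Rabs M + 1)))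
    by (apply Rmin_pos; [lra | apply Rdiv_lt_0_compat; lra]).
  exists (mkposreal _ Hdel). intros y Hy.
  assert (Hyz : Cmod (y - z) < Rmin r (eps / (Rabs M + 1))) by exact Hy.
  enough (Cmod (f y - f z - (y - z) * l) <= eps * Cmod (y - z)) by assumption.
  pose proof (Rmin_l r (eps / (Rabs M + 1))). pose proof (Rmin_r r (eps / (Rabs M + 1))).
  pose proof (Cmod_ge_0 (y - z)).
  assert (HMd : (Rabs M + 1) * Cmod (y - z) <= eps).
  { assert (E : (Rabs M + 1) * (eps / (Rabs M + 1)) = eps) by (field; lra).
    rewrite <- E. apply Rmult_le_compat_l; lra. }
  eapply Rle_trans; [apply Hrem; lra|].
  pose proof (Rle_abs M). nra.
Qed.

Lemma is_Cderive_AbsRing (f : C -> C) (z l : C) :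
  is_Cderive f z l <-> @is_derive C_AbsRing (AbsRing_NormedModule C_AbsRing) f z l.
Proof. split; intros [[A B C] D]; repeat split; assumption. Qed.

Lemma ex_Cderive_mult (f g : C -> C) (z : C) :
  ex_Cderive f z -> ex_Cderive g z -> ex_Cderive (fun t => f t * g t)%C z.
Proof.
  intros [df Hf] [dg Hg]. exists (df * g z + f z * dg)%C.
  apply is_Cderive_AbsRing, (@is_derive_mult C_AbsRing);
    [apply is_Cderive_AbsRing, Hf | apply is_Cderive_AbsRing, Hg | apply Cmult_comm].
Qed.

Lemma ex_Cderive_plus (f g : C -> C) (z : C) :
  ex_Cderive f z -> ex_Cderive g z -> ex_Cderive (fun t => f t + g t)%C z.
Proof. apply (@ex_derive_plus C_AbsRing C_NormedModule). Qed.

Lemma ex_Cderive_comp (f g : C -> C) (z : C) :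
  ex_Cderive f (g z) -> ex_Cderive g z -> ex_Cderive (fun t => f (g t)) z.
Proof.
  intros Hf [l Hg]. apply (@ex_derive_comp C_AbsRing C_NormedModule); [exact Hf|].
  exists l. apply is_Cderive_AbsRing, Hg.
Qed.

Lemma ex_Cderive_const (a z : C) : ex_Cderive (fun _ => a) z.
Proof. exists zero. apply (@is_derive_const C_AbsRing C_NormedModule). Qed.

Lemma is_Cderive_Cexp (z : C) : is_Cderive Cexp z (Cexp z).
Proof.
  apply (is_Cderive_of_remainder_le _ _ _ 1 (Cmod (Cexp z) * 8)); [lra|]. intros y Hy.
  assert (HE : Cexp y = (Cexp z * Cexp (y - z))%C) by (rewrite <- Cexp_add; f_equal; ring).
  replace (Cexp y - Cexp z - (y - z) * Cexp z)%C with (Cexp z * (Cexp (y - z) - 1 - (y - z)))%C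
    by (rewrite HE; ring).
  rewrite Cmod_mult, Rmult_assoc.
  apply Rmult_le_compat_l; [apply Cmod_ge_0 | apply Cexp_sub_1_sub_id_le; lra].
Qed.

Lemma is_Cderive_Cinv (z : C) : z <> 0%C -> is_Cderive (fun y => / y)%C z (- / (z * z))%C.
Proof.
  intros Hz. pose proof (proj1 (Cmod_gt_0 z) Hz) as Hm.
  apply (is_Cderive_of_remainder_le _ _ _ (Cmod z / 2) (2 / Cmod z ^ 3)); [lra|].
  intros y Hy. pose proof (Cmod_dist_ge y z) as Hyz.
  assert (Hy0 : y <> 0%C) by (apply Cmod_gt_0; lra).
  replace (/ y - / z - (y - z) * - / (z * z))%C with ((y - z) * (y - z) / (z * z * y))%C
    by (field; auto).
  rewrite Cmod_div, !Cmod_mult by (repeat apply Cmult_neq_0; auto).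
  pose proof (Cmod_ge_0 (y - z)).
  apply Rle_trans with (Cmod (y - z) * Cmod (y - z) / (Cmod z * Cmod z * (Cmod z / 2))).
  - assert (0 < Cmod z * Cmod z) by nra.
    apply Rmult_le_compat_l; [nra|]. apply Rinv_le_contravar; [nra|].
    apply Rmult_le_compat_l; lra.
  - right. field. lra.
Qed.

Lemma is_Cderive_Csqrt (v : C) : 0 < Re (Csqrt v) -> is_Cderive Csqrt v (/ (2 * Csqrt v))%C.
Proof.
  intros Hr. set (r := Re (Csqrt v)) in *.
  apply (is_Cderive_of_remainder_le _ _ _ 1 (/ (2 * r ^ 3))); [lra|]. intros y _.
  set (Sy := Csqrt y). set (Sv := Csqrt v).
  assert (Hsum : r <= Cmod (Sy + Sv)).
  { eapply Rle_trans; [|apply Re_le_Cmod]. change (Re (Sy + Sv)%C) with (Re Sy + r).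
    pose proof (Csqrt_Re_nonneg y). fold Sy in H. lra. }
  assert (HSv : r <= Cmod Sv) by apply Re_le_Cmod.
  assert (Hsum0 : (Sy + Sv)%C <> 0%C) by (apply Cmod_gt_0; lra).
  assert (HSv0 : Sv <> 0%C) by (apply Cmod_gt_0; lra).
  assert (Hdiff : (Sy - Sv)%C = ((y - v) / (Sy + Sv))%C).
  { rewrite <- (Csqrt_sq y), <- (Csqrt_sq v) at 1. fold Sy Sv. field. exact Hsum0. }
  assert (HSd : Cmod (Sv - Sy) <= Cmod (y - v) / r).
  { replace (Sv - Sy)%C with (- (Sy - Sv))%C by ring. rewrite Cmod_opp, Hdiff, Cmod_div by auto.
    apply Rmult_le_compat_l; [apply Cmod_ge_0 | apply Rinv_le_contravar; lra]. }
  replace (Sy - Sv - (y - v) * / (2 * Sv))%C with ((y - v) * (Sv - Sy) / ((Sy + Sv) * (2 * Sv)))%C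
    by (rewrite Hdiff; field; repeat split; auto; intro H; injection H; lra).
  rewrite Cmod_div, !Cmod_mult by (repeat apply Cmult_neq_0; auto; intro H; injection H; lra).
  rewrite Cmod_R, Rabs_pos_eq by lra.
  pose proof (Cmod_ge_0 (y - v)). pose proof (Cmod_ge_0 (Sv - Sy)).
  apply Rle_trans with (Cmod (y - v) * (Cmod (y - v) / r) / (r * (2 * r))).
  - apply Rmult_le_compat; [nra | left; apply Rinv_0_lt_compat; nra | |].
    + apply Rmult_le_compat_l; assumption.
    + apply Rinv_le_contravar; [nra|]. apply Rmult_le_compat; lra.
  - right. field. lra.
Qed.

Lemma ln_lipschitz (a b : R) : 0 < b -> b / 2 <= a -> Rabs (ln a - ln b) <= 2 / b * Rabs (a - b).
Proof.
  intros Hb Ha.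
  assert (Hmin : forall c, Rmin b a <= c -> b / 2 <= c)
    by (intros c Hc; pose proof (Rmin_glb b a (b / 2)); lra).
  destruct (MVT_abs ln Rinv b a) as [c [-> Hc]].
  { intros c Hc. apply derivable_pt_lim_ln. specialize (Hmin c (proj1 Hc)). lra. }
  apply Rmult_le_compat_r; [apply Rabs_pos|].
  specialize (Hmin c (proj1 Hc)).
  rewrite Rabs_pos_eq by (left; apply Rinv_0_lt_compat; lra).
  replace (2 / b) with (/ (b / 2)) by (field; lra).
  apply Rinv_le_contravar; lra.
Qed.

Lemma atan_lipschitz (x y : R) : Rabs (atan x - atan y) <= Rabs (x - y).
Proof.
  rewrite <- (Rmult_1_l (Rabs (x - y))).
  destruct (MVT_abs atan (fun t => / (1 + t ^ 2)) y x) as [c [-> _]].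
  { intros c _. apply derivable_pt_lim_atan. }
  apply Rmult_le_compat_r; [apply Rabs_pos|].
  pose proof (pow2_ge_0 c).
  rewrite Rabs_pos_eq by (left; apply Rinv_0_lt_compat; lra).
  rewrite <- Rinv_1. apply Rinv_le_contravar; lra.
Qed.

Lemma div_sub_div_le (y1 y2 u1 u2 d : R) :
  0 < u1 -> u1 / 2 <= y1 -> Rabs (y1 - u1) <= d -> Rabs (y2 - u2) <= d ->
  Rabs (y2 / y1 - u2 / u1) <= 2 * (u1 + Rabs u2) / u1 ^ 2 * d.
Proof.
  intros Hu Hy H1 H2.
  replace (y2 / y1 - u2 / u1) with (((y2 - u2) * u1 - u2 * (y1 - u1)) / (y1 * u1)) by (field; lra).
  assert (Hyu : 0 < y1 * u1) by nra.
  rewrite Rabs_div, (Rabs_pos_eq (y1 * u1)) by lra.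
  assert (N : Rabs ((y2 - u2) * u1 - u2 * (y1 - u1)) <= (u1 + Rabs u2) * d).
  { unfold Rminus at 1. eapply Rle_trans; [apply Rabs_triang|].
    rewrite Rabs_Ropp, !Rabs_mult, (Rabs_pos_eq u1) by lra.
    pose proof (Rabs_pos u2). pose proof (Rabs_pos (y1 - u1)). nra. }
  apply Rle_trans with ((u1 + Rabs u2) * d / (u1 * (u1 / 2))).
  - pose proof (Rabs_pos ((y2 - u2) * u1 - u2 * (y1 - u1))).
    apply Rmult_le_compat; [lra | left; apply Rinv_0_lt_compat; nra | lra |].
    apply Rinv_le_contravar; nra.
  - right. field. lra.
Qed.

Lemma Clog_lipschitz (u y : C) : 0 < Re u -> Cmod (y - u) <= Re u / 2 ->
  0 < Re y /\
  Cmod (Clog y - Clog u) <= (2 / Cmod u + 4 * Cmod u / Re u ^ 2) * Cmod (y - u).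
Proof.
  intros Hu Hd. set (d := Cmod (y - u)) in *.
  assert (E1 : Rabs (Re y - Re u) <= d) by apply (re_le_Cmod (y - u)).
  assert (E2 : Rabs (Im y - Im u) <= d) by apply (Im_le_Cmod (y - u)).
  pose proof (Re_le_Cmod u) as HRu. pose proof (Im_le_Cmod u) as HIu.
  assert (Hy1 : Re u / 2 <= Re y) by (apply Rabs_le_between in E1; lra).
  split; [lra|].
  assert (Hmod : Rabs (Cmod y - Cmod u) <= d).
  { apply Rabs_le. pose proof (Cmod_dist_ge y u). pose proof (Cmod_dist_ge u y).
    rewrite <- (Cmod_opp (u - y)) in H0. replace (- (u - y))%C with (y - u)%C in H0 by ring.
    fold d in H, H0. lra. }
  eapply Rle_trans; [apply Cmod_le_Re_Im|].
  change (Re (Clog y - Clog u)%C) with (ln (Cmod y) - ln (Cmod u)).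
  change (Im (Clog y - Clog u)%C) with (Arg y - Arg u).
  rewrite !Arg_Re_pos by lra.
  pose proof (ln_lipschitz (Cmod y) (Cmod u) ltac:(lra) ltac:(apply Rabs_le_between in Hmod; lra)) as L1.
  pose proof (atan_lipschitz (Im y / Re y) (Im u / Re u)) as L2.
  pose proof (div_sub_div_le (Re y) (Im y) (Re u) (Im u) d Hu Hy1 E1 E2) as L3.
  assert (2 * (Re u + Rabs (Im u)) / Re u ^ 2 <= 4 * Cmod u / Re u ^ 2).
  { unfold Rdiv. apply Rmult_le_compat_r; [|lra]. left; apply Rinv_0_lt_compat; nra. }
  assert (2 / Cmod u * Rabs (Cmod y - Cmod u) <= 2 / Cmod u * d).
  { apply Rmult_le_compat_l; [|lra]. left; apply Rdiv_lt_0_compat; lra. }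
  assert (0 <= d) by apply Cmod_ge_0. nra.
Qed.

(* Log is differentiated through exp: with k = Log y - Log u one has e^k = y / u, so the
   remainder is - (e^k - 1 - k). *)
Lemma is_Cderive_Clog (u : C) : 0 < Re u -> is_Cderive Clog u (/ u)%C.
Proof.
  intros Hu. pose proof (Re_le_Cmod u).
  set (M := 2 / Cmod u + 4 * Cmod u / Re u ^ 2).
  assert (HM : 0 < M).
  { unfold M. assert (0 < 2 / Cmod u) by (apply Rdiv_lt_0_compat; lra).
    assert (0 < 4 * Cmod u / Re u ^ 2) by (apply Rdiv_lt_0_compat; nra). lra. }
  assert (Hr : 0 < Rmin (Re u / 2) (/ M)) by (apply Rmin_pos; [lra | apply Rinv_0_lt_compat, HM]).
  apply (is_Cderive_of_remainder_le _ _ _ _ (8 * M ^ 2) Hr). intros y Hy.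
  pose proof (Rmin_l (Re u / 2) (/ M)). pose proof (Rmin_r (Re u / 2) (/ M)).
  destruct (Clog_lipschitz u y Hu ltac:(lra)) as [Hy0 Hk].
  fold M in Hk. set (k := (Clog y - Clog u)%C) in *. set (d := Cmod (y - u)) in *.
  assert (0 <= d) by apply Cmod_ge_0. pose proof (Cmod_ge_0 k).
  assert (Hk1 : Cmod k <= 1).
  { apply Rle_trans with (M * d); [exact Hk|].
    apply Rle_trans with (M * / M); [apply Rmult_le_compat_l; lra | right; field; lra]. }
  assert (HE : Cexp k = (y / u)%C).
  { assert (Hyu : Cexp (Clog y) = (Cexp k * Cexp (Clog u))%C)
      by (rewrite <- Cexp_add; f_equal; unfold k; ring).
    rewrite !Cexp_Clog in Hyu by (apply Re_pos_neq0; assumption).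
    rewrite Hyu. field. apply Re_pos_neq0, Hu. }
  replace (k - (y - u) * / u)%C with (- (Cexp k - 1 - k))%C
    by (rewrite HE; field; apply Re_pos_neq0, Hu).
  rewrite Cmod_opp. eapply Rle_trans; [apply Cexp_sub_1_sub_id_le, Hk1|].
  replace (8 * M ^ 2 * d ^ 2) with (8 * (M * d) ^ 2) by ring.
  apply Rmult_le_compat_l; [lra|]. apply pow_incr. split; lra.
Qed.

(** * Hyperbolic functions and the map psi *)

Definition Csinh (z : C) : C := ((Cexp z - Cexp (- z)) / 2)%C.
Definition Ccosh (z : C) : C := ((Cexp z + Cexp (- z)) / 2)%C.

Lemma cosh_sq (x : R) : cosh x ^ 2 = sinh x ^ 2 + 1.
Proof.
  unfold cosh, sinh. rewrite exp_Ropp. pose proof (exp_pos x). field. lra.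
Qed.

Lemma Csinh_parts (z : C) : Csinh z = (sinh (Re z) * cos (Im z), cosh (Re z) * sin (Im z)).
Proof.
  destruct z as [x y]. unfold Csinh, Cexp, sinh, cosh. simpl.
  rewrite cos_neg, sin_neg. apply C_ext; simpl; field.
Qed.

Lemma Ccosh_parts (z : C) : Ccosh z = (cosh (Re z) * cos (Im z), sinh (Re z) * sin (Im z)).
Proof.
  destruct z as [x y]. unfold Ccosh, Cexp, sinh, cosh. simpl.
  rewrite cos_neg, sin_neg. apply C_ext; simpl; field.
Qed.

Lemma Cmod_Csinh_sq (z : C) : Cmod (Csinh z) ^ 2 = sinh (Re z) ^ 2 + sin (Im z) ^ 2.
Proof.
  rewrite Cmod2_alt, Csinh_parts. simpl Re; simpl Im.
  pose proof (cosh_sq (Re z)). pose proof (sin2_cos2 (Im z)). unfold Rsqr in *. nra.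
Qed.

Lemma Cmod_Ccosh_sq (z : C) : Cmod (Ccosh z) ^ 2 = sinh (Re z) ^ 2 + cos (Im z) ^ 2.
Proof.
  rewrite Cmod2_alt, Ccosh_parts. simpl Re; simpl Im.
  pose proof (cosh_sq (Re z)). pose proof (sin2_cos2 (Im z)). unfold Rsqr in *. nra.
Qed.

Lemma abs_mul_cos_le_abs_sin (b : R) : - (PI / 2) < b < PI / 2 -> Rabs b * cos b <= Rabs (sin b).
Proof.
  intros Hb. pose proof (cos_gt_0 b (proj1 Hb) (proj2 Hb)) as Hc.
  pose proof (atan_lipschitz (tan b) 0) as H.
  rewrite atan_tan, atan_0, !Rminus_0_r in H by exact Hb.
  unfold tan in H. rewrite Rabs_div, (Rabs_pos_eq (cos b)) in H by lra.
  apply (Rmult_le_compat_r (cos b)) in H; [|lra].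
  replace (Rabs (sin b) / cos b * cos b) with (Rabs (sin b)) in H by (field; lra). exact H.
Qed.

Lemma cos_Im_pos_of_strip (d : R) (zeta : C) : d <= PI / 2 -> strip d zeta -> 0 < cos (Im zeta).
Proof. unfold strip. intros Hd Hz. apply Rabs_def2 in Hz. apply cos_gt_0; lra. Qed.

Lemma Re_Csqrt_sq_add_1_pos (w : C) : 0 < Re w -> 0 < Re (Csqrt (w * w + 1)).
Proof.
  intros Hw. destruct (Csqrt_Re_nonneg (w * w + 1)) as [H0|H0]; [exact H0|exfalso].
  pose proof (Csqrt_sq (w * w + 1)) as Hs.
  destruct (Csqrt (w * w + 1)) as [s1 s2]. destruct w as [w1 w2].
  simpl in H0, Hw. subst s1.
  assert (E1 := f_equal fst Hs). assert (E2 := f_equal snd Hs). simpl in E1, E2.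
  assert (w2 = 0) by nra. subst. nra.
Qed.

(* Multiplying by the unit [e^(-i Im z)] turns the real part of [e^(2z) + 1] into
   [cos (Im z) (1 + e^(2 Re z))]. *)
Lemma Cmod_Cexp_sq_add_1_ge (z : C) :
  cos (Im z) * (1 + Cmod (Cexp z) ^ 2) <= Cmod (Cexp z * Cexp z + 1).
Proof.
  rewrite Cmod_Cexp. destruct z as [x y]. simpl Re; simpl Im.
  set (r := (cos y, - sin y)).
  assert (Hr : Cmod r = 1).
  { unfold r, Cmod. simpl. pose proof (sin2_cos2 y). unfold Rsqr in H.
    replace (cos y * (cos y * 1) + - sin y * (- sin y * 1)) with 1 by lra. apply sqrt_1. }
  rewrite <- (Rmult_1_r (Cmod _)), <- Hr, <- Cmod_mult.
  eapply Rle_trans; [|apply Re_le_Cmod]. unfold r, Cexp. simpl.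
  pose proof (sin2_cos2 y) as H. unfold Rsqr in H. right.
  rewrite <- (Rmult_1_r (exp x ^ 2)) at 1. rewrite <- H. ring.
Qed.

Section Psi.

Variable zeta : C.
Hypothesis cos_Im_pos : 0 < cos (Im zeta).

Let w := Cexp zeta.
Let s := Csqrt (w * w + 1).

Lemma Re_Cexp_pos : 0 < Re w.
Proof. unfold w, Cexp. simpl. apply Rmult_lt_0_compat; [apply exp_pos | exact cos_Im_pos]. Qed.

Let Re_s_pos : 0 < Re s := Re_Csqrt_sq_add_1_pos w Re_Cexp_pos.

Let Re_w_add_s_pos : 0 < Re (w + s).
Proof.
  change (Re (w + s)%C) with (Re w + Re s). pose proof Re_Cexp_pos. pose proof Re_s_pos. lra.
Qed.

Lemma Cexp_psi : Cexp (psi zeta) = (w + s)%C.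
Proof. apply Cexp_Clog, Re_pos_neq0, Re_w_add_s_pos. Qed.

Lemma Cexp_opp_psi : Cexp (- psi zeta) = (s - w)%C.
Proof.
  rewrite Cexp_opp, Cexp_psi.
  assert (Hsq : (s * s)%C = (w * w + 1)%C) by apply Csqrt_sq.
  pose proof (Re_pos_neq0 _ Re_w_add_s_pos).
  transitivity ((s * s - w * w) / (w + s))%C; [rewrite Hsq; field | field]; auto.
Qed.

Lemma Csinh_psi : Csinh (psi zeta) = w.
Proof. unfold Csinh. rewrite Cexp_psi, Cexp_opp_psi. field. Qed.

Lemma Ccosh_psi : Ccosh (psi zeta) = s.
Proof. unfold Ccosh. rewrite Cexp_psi, Cexp_opp_psi. field. Qed.

Lemma Im_psi_bound : - (PI / 2) < Im (psi zeta) < PI / 2.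
Proof.
  change (Im (psi zeta)) with (Arg (w + s)). rewrite Arg_Re_pos by exact Re_w_add_s_pos.
  pose proof (atan_bound (Im (w + s) / Re (w + s))). lra.
Qed.

Lemma Re_psi_pos : 0 < Re (psi zeta).
Proof.
  pose proof Re_Cexp_pos as H. rewrite <- Csinh_psi, Csinh_parts in H.
  change (0 < sinh (Re (psi zeta)) * cos (Im (psi zeta))) in H.
  pose proof Im_psi_bound as Hb. pose proof (cos_gt_0 _ (proj1 Hb) (proj2 Hb)).
  assert (Hsh : 0 < sinh (Re (psi zeta))) by (apply (Rmult_lt_reg_r (cos (Im (psi zeta)))); lra).
  destruct (Rle_lt_dec (Re (psi zeta)) 0) as [[Ha|Ha]|]; [|rewrite Ha, sinh_0 in Hsh; lra|assumption].
  apply sinh_lt in Ha. rewrite sinh_0 in Ha. lra.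
Qed.

Lemma Im_psi_eq_0 : Im zeta = 0 -> Im (psi zeta) = 0.
Proof.
  intros Hy. set (b := Im (psi zeta)).
  assert (Hsin : sin b = 0).
  { assert (H : Im w = 0) by (unfold w, Cexp; simpl; rewrite Hy, sin_0; ring).
    rewrite <- Csinh_psi, Csinh_parts in H.
    change (cosh (Re (psi zeta)) * sin b = 0) in H.
    assert (0 < cosh (Re (psi zeta))) by (unfold cosh; pose proof (exp_pos (Re (psi zeta))); pose proof (exp_pos (- Re (psi zeta))); lra).
    apply Rmult_integral in H as [H|H]; [lra | exact H]. }
  pose proof (abs_mul_cos_le_abs_sin b Im_psi_bound) as H.
  pose proof (cos_gt_0 _ (proj1 Im_psi_bound) (proj2 Im_psi_bound)) as Hc.
  rewrite Hsin, Rabs_R0 in H. fold b in Hc. pose proof (Rabs_pos b).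
  apply Rabs_eq_0. nra.
Qed.

Lemma dpsi_eq : dpsi zeta = (Csinh (psi zeta) / Ccosh (psi zeta))%C.
Proof.
  rewrite Csinh_psi, Ccosh_psi. unfold dpsi. rewrite Cexp_double.
  fold w. unfold s. f_equal. f_equal. ring.
Qed.

Lemma Cmod_Csinh_psi_pos : 0 < Cmod (Csinh (psi zeta)).
Proof. rewrite Csinh_psi. eapply Rlt_le_trans; [apply Re_Cexp_pos | apply Re_le_Cmod]. Qed.

Lemma Cmod_Ccosh_psi_pos : 0 < Cmod (Ccosh (psi zeta)).
Proof. rewrite Ccosh_psi. eapply Rlt_le_trans; [apply Re_s_pos | apply Re_le_Cmod]. Qed.

Lemma Cmod_psi_pos : 0 < Cmod (psi zeta).
Proof. eapply Rlt_le_trans; [apply Re_psi_pos | apply Re_le_Cmod]. Qed.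

Lemma Cmod_1_add_psi_pos : 0 < Cmod (1 + psi zeta).
Proof.
  eapply Rlt_le_trans; [|apply Re_le_Cmod]. change (0 < 1 + Re (psi zeta)).
  pose proof Re_psi_pos. lra.
Qed.

Let Cmod_s_sq : Cmod (w * w + 1) = Cmod (Ccosh (psi zeta)) ^ 2.
Proof. rewrite Ccosh_psi, <- (Csqrt_sq (w * w + 1)), Cmod_mult. fold s. ring. Qed.

Lemma Cmod_1_add_Cexp_double : Cmod (1 + Cexp (2 * zeta)) = Cmod (Ccosh (psi zeta)) ^ 2.
Proof. rewrite Cexp_double, <- Cmod_s_sq. fold w. f_equal. ring. Qed.

Lemma Cmod_1_add_Cexp_opp_double :
  Cmod (1 + Cexp (- (2 * zeta))) = Cmod (Ccosh (psi zeta)) ^ 2 / Cmod (Csinh (psi zeta)) ^ 2.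
Proof.
  pose proof (Re_pos_neq0 _ Re_Cexp_pos) as Hw.
  rewrite Cexp_opp, Cexp_double, <- Cmod_s_sq, Csinh_psi. fold w.
  replace (1 + / (w * w))%C with ((w * w + 1) / (w * w))%C by (field; exact Hw).
  rewrite Cmod_div, Cmod_mult by (apply Cmult_neq_0; exact Hw).
  unfold Rdiv. do 2 f_equal. ring.
Qed.

Lemma Cmod_Ccosh_psi_sq_ge :
  cos (Im zeta) * (1 + Cmod (Csinh (psi zeta)) ^ 2) <= Cmod (Ccosh (psi zeta)) ^ 2.
Proof. rewrite Csinh_psi, <- Cmod_s_sq. apply Cmod_Cexp_sq_add_1_ge. Qed.

Let ex_Cderive_s : ex_Cderive (fun t => Csqrt (Cexp t * Cexp t + 1)) zeta.
Proof.
  apply (ex_Cderive_comp Csqrt (fun t => Cexp t * Cexp t + 1)%C).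
  - eexists. apply is_Cderive_Csqrt, Re_s_pos.
  - apply ex_Cderive_plus; [apply ex_Cderive_mult|apply ex_Cderive_const];
      eexists; apply is_Cderive_Cexp.
Qed.

Lemma ex_Cderive_psi : ex_Cderive psi zeta.
Proof.
  apply (ex_Cderive_comp Clog (fun t => Cexp t + Csqrt (Cexp t * Cexp t + 1))%C).
  - eexists. apply is_Cderive_Clog, Re_w_add_s_pos.
  - apply ex_Cderive_plus; [eexists; apply is_Cderive_Cexp | exact ex_Cderive_s].
Qed.

Lemma ex_Cderive_dpsi : ex_Cderive dpsi zeta.
Proof.
  apply (ex_derive_ext (fun t => Cexp t * / Csqrt (Cexp t * Cexp t + 1))%C).
  - intros t. unfold dpsi. rewrite Cexp_double.
    replace (1 + Cexp t * Cexp t)%C with (Cexp t * Cexp t + 1)%C by ring. reflexivity.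
  - apply ex_Cderive_mult; [eexists; apply is_Cderive_Cexp|].
    apply (ex_Cderive_comp (fun t => / t)%C (fun t => Csqrt (Cexp t * Cexp t + 1))).
    + eexists. apply is_Cderive_Cinv, Re_pos_neq0, Re_s_pos.
    + exact ex_Cderive_s.
Qed.

End Psi.

Lemma analytic_on_F (d : R) (f : C -> C) : d <= PI / 2 ->
  analytic_on (psi_strip d) f ->
  analytic_on (strip d) (fun zeta => (f (psi zeta) * dpsi zeta)%C).
Proof.
  intros Hd Hf zeta Hz. pose proof (cos_Im_pos_of_strip d zeta Hd Hz) as Hc.
  apply ex_Cderive_mult; [|exact (ex_Cderive_dpsi zeta Hc)].
  apply (ex_Cderive_comp f psi); [apply Hf; exists zeta; auto | exact (ex_Cderive_psi zeta Hc)].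
Qed.

Lemma sinh_le_mul_cosh (a : R) : 0 <= a -> sinh a <= a * cosh a.
Proof.
  intros [Ha|<-]; [|rewrite sinh_0; lra].
  destruct (MVT_cor2 (fun x => x * cosh x - sinh x) (fun x => x * sinh x) 0 a Ha) as [c [Hc Hca]].
  { intros c _. apply is_derive_Reals. unfold cosh, sinh. auto_derive; [exact I | field]. }
  cbv beta in Hc. rewrite sinh_0 in Hc. assert (0 < sinh c) by (rewrite <- sinh_0; apply sinh_lt; lra).
  assert (0 < c * sinh c * (a - 0)) by (apply Rmult_lt_0_compat; [apply Rmult_lt_0_compat|]; lra).
  lra.
Qed.

Lemma mul_cosh_le_sinh (a : R) : 0 <= a -> a * cosh a <= (1 + a) * sinh a.
Proof.
  intros Ha. pose proof (exp_ineq1_le (a + a)) as H. rewrite exp_plus in H.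
  unfold cosh, sinh. rewrite exp_Ropp. pose proof (exp_pos a).
  assert (Hid : (1 + a) * ((exp a - / exp a) / 2) - a * ((exp a + / exp a) / 2)
                = (exp a * exp a - (1 + (a + a))) / (2 * exp a)) by (field; lra).
  assert (0 <= (exp a * exp a - (1 + (a + a))) / (2 * exp a)) by (apply Rdiv_le_0_compat; lra).
  lra.
Qed.

Lemma cosh_le_exp (a : R) : 0 <= a -> cosh a <= exp a.
Proof.
  intros Ha. unfold cosh.
  assert (exp (- a) <= exp a) by (destruct (Req_dec a 0) as [->|]; [rewrite Ropp_0; lra | left; apply exp_increasing; lra]).
  lra.
Qed.

Lemma Cmod_Ccosh_le_exp (z : C) : 0 <= Re z -> Cmod (Ccosh z) <= exp (Re z).
Proof.
  intros Ha. apply Rsqr_incr_0_var; [|left; apply exp_pos].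
  rewrite !Rsqr_pow2, Cmod_Ccosh_sq.
  assert (cosh (Re z) ^ 2 <= exp (Re z) ^ 2).
  { apply pow_incr. split; [|apply cosh_le_exp, Ha]. unfold cosh. pose proof (exp_pos (Re z)). pose proof (exp_pos (- Re z)). lra. }
  rewrite cosh_sq in H. pose proof (COS_bound (Im z)). nra.
Qed.

Lemma sinh_nonneg (a : R) : 0 <= a -> 0 <= sinh a.
Proof. intros [Ha|<-]; [left; rewrite <- sinh_0; apply sinh_lt, Ha | rewrite sinh_0; lra]. Qed.

Lemma hyperbolic_ratio_upper (a b : R) : 0 <= a -> b ^ 2 * cos b ^ 2 <= sin b ^ 2 ->
  (a ^ 2 + b ^ 2) * (sinh a ^ 2 + cos b ^ 2) <=
  2 * (((1 + a) ^ 2 + b ^ 2) * (sinh a ^ 2 + sin b ^ 2)).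
Proof.
  intros Ha Hb. pose proof (mul_cosh_le_sinh a Ha). pose proof (cosh_sq a).
  pose proof (sin2_cos2 b) as Hcs. rewrite !Rsqr_pow2 in Hcs.
  assert (Hch : 1 <= cosh a) by (unfold cosh; pose proof (exp_ineq1_le a); pose proof (exp_ineq1_le (- a)); lra).
  assert (H1 : a ^ 2 <= (1 + a) ^ 2 * sinh a ^ 2).
  { rewrite <- Rpow_mult_distr. apply pow_incr. nra. }
  assert (H2 : a ^ 2 * cos b ^ 2 <= a ^ 2) by (pose proof (pow2_ge_0 (sin b)); nra).
  pose proof (pow2_ge_0 a). pose proof (pow2_ge_0 b). pose proof (pow2_ge_0 (sinh a)).
  pose proof (pow2_ge_0 (sin b)). assert (1 <= (1 + a) ^ 2) by nra.
  nra.
Qed.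

Lemma hyperbolic_ratio_lower (a b c : R) : 0 <= a -> 0 < c <= 1 -> sin b ^ 2 <= b ^ 2 ->
  c * (1 + (sinh a ^ 2 + sin b ^ 2)) <= sinh a ^ 2 + cos b ^ 2 ->
  ((1 + a) ^ 2 + b ^ 2) * (sinh a ^ 2 + sin b ^ 2) <=
  2 * (1 + 1 / c) * ((a ^ 2 + b ^ 2) * (sinh a ^ 2 + cos b ^ 2)).
Proof.
  intros Ha Hc Hsb HQ. pose proof (sinh_le_mul_cosh a Ha). pose proof (cosh_sq a).
  pose proof (sinh_nonneg a Ha).
  set (P := sinh a ^ 2 + sin b ^ 2) in *. set (Q := sinh a ^ 2 + cos b ^ 2) in *.
  set (Z := a ^ 2 + b ^ 2).
  assert (HZ : 0 <= Z) by (unfold Z; pose proof (pow2_ge_0 a); pose proof (pow2_ge_0 b); lra).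
  assert (HP : 0 <= P) by (unfold P; pose proof (pow2_ge_0 (sinh a)); pose proof (pow2_ge_0 (sin b)); lra).
  assert (HQ1 : 1 + P <= Q / c).
  { apply (Rmult_le_reg_l c); [lra|]. replace (c * (Q / c)) with Q by (field; lra). lra. }
  assert (HPZ : P <= (1 + Q) * Z).
  { assert (sinh a ^ 2 <= a ^ 2 * cosh a ^ 2) by (rewrite <- Rpow_mult_distr; apply pow_incr; lra).
    assert (sinh a ^ 2 <= Q) by (unfold Q; pose proof (pow2_ge_0 (cos b)); lra).
    unfold P, Z. pose proof (pow2_ge_0 b). nra. }
  assert (HY : (1 + a) ^ 2 + b ^ 2 <= 2 * (1 + Z))
    by (unfold Z; pose proof (pow2_ge_0 (1 - a)); nra).
  replace (2 * (1 + 1 / c) * (Z * Q)) with (2 * Q * Z + 2 * (Q / c) * Z) by (field; lra).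
  nra.
Qed.

Lemma hyperbolic_ratio_upper_real (a : R) : 0 <= a ->
  a ^ 2 * (sinh a ^ 2 + 1) <= (1 + a) ^ 2 * sinh a ^ 2.
Proof.
  intros Ha. rewrite <- cosh_sq, <- !Rpow_mult_distr. apply pow_incr. split.
  - unfold cosh. pose proof (exp_pos a). pose proof (exp_pos (- a)). nra.
  - apply mul_cosh_le_sinh, Ha.
Qed.

Lemma hyperbolic_ratio_lower_real (a : R) : 0 <= a ->
  (1 + a) ^ 2 * sinh a ^ 2 <= 4 * (a ^ 2 * (sinh a ^ 2 + 1)).
Proof.
  intros Ha. rewrite <- cosh_sq.
  replace (4 * (a ^ 2 * cosh a ^ 2)) with ((2 * a * cosh a) ^ 2) by ring.
  rewrite <- Rpow_mult_distr. apply pow_incr.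
  pose proof (sinh_nonneg a Ha). pose proof (sinh_le_mul_cosh a Ha).
  assert (sinh a <= cosh a) by (unfold sinh, cosh; pose proof (exp_pos (- a)); lra).
  split; nra.
Qed.

(** * The ratio |z| |cosh z| / (|1 + z| |sinh z|) at z = psi zeta *)

Definition psi_ratio (zeta : C) : R :=
  Cmod (psi zeta) * Cmod (Ccosh (psi zeta)) / (Cmod (1 + psi zeta) * Cmod (Csinh (psi zeta))).

Section Psi_ratio.

Variable zeta : C.
Hypothesis cos_Im_pos : 0 < cos (Im zeta).

Let a := Re (psi zeta).
Let b := Im (psi zeta).

Let psi_moduli_sq :
  (Cmod (psi zeta) * Cmod (Ccosh (psi zeta))) ^ 2 = (a ^ 2 + b ^ 2) * (sinh a ^ 2 + cos b ^ 2) /\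
  (Cmod (1 + psi zeta) * Cmod (Csinh (psi zeta))) ^ 2 =
    ((1 + a) ^ 2 + b ^ 2) * (sinh a ^ 2 + sin b ^ 2).
Proof.
  rewrite !Rpow_mult_distr, Cmod_Csinh_sq, Cmod_Ccosh_sq, !Cmod2_alt.
  split; [reflexivity|]. unfold a, b. simpl. ring.
Qed.

Let a_pos : 0 < a := Re_psi_pos zeta cos_Im_pos.

Let b_bound : - (PI / 2) < b < PI / 2 := Im_psi_bound zeta cos_Im_pos.

Lemma psi_ratio_num_pos : 0 < Cmod (psi zeta) * Cmod (Ccosh (psi zeta)).
Proof. apply Rmult_lt_0_compat; [apply Cmod_psi_pos | apply Cmod_Ccosh_psi_pos]; exact cos_Im_pos. Qed.

Lemma psi_ratio_den_pos : 0 < Cmod (1 + psi zeta) * Cmod (Csinh (psi zeta)).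
Proof. apply Rmult_lt_0_compat; [apply Cmod_1_add_psi_pos | apply Cmod_Csinh_psi_pos]; exact cos_Im_pos. Qed.

Lemma psi_ratio_upper :
  (Cmod (psi zeta) * Cmod (Ccosh (psi zeta))) ^ 2 <=
  2 * (Cmod (1 + psi zeta) * Cmod (Csinh (psi zeta))) ^ 2.
Proof.
  destruct psi_moduli_sq as [-> ->]. apply hyperbolic_ratio_upper; [left; exact a_pos|].
  pose proof (abs_mul_cos_le_abs_sin b b_bound) as H.
  pose proof (cos_gt_0 b (proj1 b_bound) (proj2 b_bound)).
  rewrite <- (pow2_abs b), <- (pow2_abs (sin b)), <- Rpow_mult_distr.
  apply pow_incr. pose proof (Rabs_pos b). split; nra.
Qed.

Lemma psi_ratio_lower (d : R) : d < PI / 2 -> strip d zeta ->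
  (Cmod (1 + psi zeta) * Cmod (Csinh (psi zeta))) ^ 2 <=
  2 * (1 + 1 / cos d) * (Cmod (psi zeta) * Cmod (Ccosh (psi zeta))) ^ 2.
Proof.
  intros Hd Hz. unfold strip in Hz. apply Rabs_def2 in Hz as [Hz1 Hz2]. pose proof PI_RGT_0.
  assert (Hcd : cos d <= cos (Im zeta)).
  { destruct (Rle_dec 0 (Im zeta)); [|rewrite <- (cos_neg (Im zeta))]; apply cos_decr_1; lra. }
  assert (Hcd0 : 0 < cos d) by (apply cos_gt_0; lra).
  pose proof (Cmod_Ccosh_psi_sq_ge zeta cos_Im_pos) as Hge.
  rewrite Cmod_Csinh_sq, Cmod_Ccosh_sq in Hge. fold a b in Hge.
  destruct psi_moduli_sq as [-> ->].
  apply hyperbolic_ratio_lower; [left; exact a_pos | split; [lra | apply COS_bound] | |].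
  - rewrite <- (pow2_abs b), <- (pow2_abs (sin b)).
    apply pow_incr. split; [apply Rabs_pos | apply sin_abs_le].
  - eapply Rle_trans; [|exact Hge]. apply Rmult_le_compat_r; [|exact Hcd].
    pose proof (pow2_ge_0 (sinh a)). pose proof (pow2_ge_0 (sin b)). lra.
Qed.

Let psi_moduli_sq_real : Im zeta = 0 ->
  (Cmod (psi zeta) * Cmod (Ccosh (psi zeta))) ^ 2 = a ^ 2 * (sinh a ^ 2 + 1) /\
  (Cmod (1 + psi zeta) * Cmod (Csinh (psi zeta))) ^ 2 = (1 + a) ^ 2 * sinh a ^ 2.
Proof.
  intros Hy. assert (Hb : b = 0) by exact (Im_psi_eq_0 zeta cos_Im_pos Hy).
  destruct psi_moduli_sq as [-> ->]. rewrite Hb, sin_0, cos_0. split; ring.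
Qed.

Lemma psi_ratio_upper_real : Im zeta = 0 ->
  (Cmod (psi zeta) * Cmod (Ccosh (psi zeta))) ^ 2 <=
  (Cmod (1 + psi zeta) * Cmod (Csinh (psi zeta))) ^ 2.
Proof.
  intros Hy. destruct (psi_moduli_sq_real Hy) as [-> ->].
  apply hyperbolic_ratio_upper_real. left; exact a_pos.
Qed.

Lemma psi_ratio_lower_real : Im zeta = 0 ->
  (Cmod (1 + psi zeta) * Cmod (Csinh (psi zeta))) ^ 2 <=
  4 * (Cmod (psi zeta) * Cmod (Ccosh (psi zeta))) ^ 2.
Proof.
  intros Hy. destruct (psi_moduli_sq_real Hy) as [-> ->].
  apply hyperbolic_ratio_lower_real. left; exact a_pos.
Qed.

End Psi_ratio.

Lemma exp_le_exp (x y : R) : x <= y -> exp x <= exp y.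
Proof. intros [H | ->]; [left; apply exp_increasing, H | right; reflexivity]. Qed.

Lemma Rpower_div_le_of_sq (x y k e : R) : 0 < x -> 0 < y -> 0 <= e ->
  x ^ 2 <= k * y ^ 2 -> Rpower (x / y) e <= Rpower k (e / 2).
Proof.
  intros Hx Hy He Hk.
  assert (Hxy : 0 < x / y) by (apply Rdiv_lt_0_compat; assumption).
  assert (Hsq : (x / y) ^ 2 <= k).
  { replace ((x / y) ^ 2) with (x ^ 2 / y ^ 2) by (field; lra).
    apply (Rmult_le_reg_r (y ^ 2)); [apply pow_lt, Hy|].
    replace (x ^ 2 / y ^ 2 * y ^ 2) with (x ^ 2) by (field; lra). exact Hk. }
  replace (Rpower (x / y) e) with (Rpower ((x / y) ^ 2) (e / 2)).
  - apply Rle_Rpower_l; [lra | split; [apply pow_lt|]; assumption].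
  - unfold Rpower. rewrite ln_pow by exact Hxy. f_equal. simpl. field.
Qed.

Lemma Rpower_div_opp (x y e : R) : 0 < x -> 0 < y -> Rpower (x / y) (- e) = Rpower (y / x) e.
Proof. intros Hx Hy. unfold Rpower. rewrite !ln_div by assumption. f_equal. ring. Qed.

Lemma le_Rpower_2_mul (beta c : R) : 0 <= beta -> 0 <= c -> c <= Rpower 2 (beta / 2) * c.
Proof.
  intros Hb Hc. rewrite <- (Rmult_1_l c) at 1. apply Rmult_le_compat_r; [exact Hc|].
  rewrite <- (Rpower_O 2) by lra. apply Rle_Rpower; lra.
Qed.

Lemma psi_ratio_pow_le_strip (d alpha beta : R) (zeta : C) :
  d < PI / 2 -> 0 <= beta -> strip d zeta ->
  Rpower (psi_ratio zeta) (alpha - 1) <= Rpower 2 (beta / 2) * c_const alpha d.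
Proof.
  intros Hd Hb Hz. pose proof (cos_Im_pos_of_strip d zeta (Rlt_le _ _ Hd) Hz) as Hc.
  pose proof (psi_ratio_num_pos zeta Hc) as Hx. pose proof (psi_ratio_den_pos zeta Hc) as Hy.
  unfold c_const, psi_ratio. destruct (Rlt_dec alpha 1) as [Ha|Ha];
    (eapply Rle_trans; [|apply le_Rpower_2_mul; [exact Hb | left; apply exp_pos]]).
  - replace (alpha - 1) with (- (1 - alpha)) by ring. rewrite Rpower_div_opp by assumption.
    apply Rpower_div_le_of_sq; try assumption; [lra|].
    apply psi_ratio_lower; assumption.
  - apply Rpower_div_le_of_sq; try assumption; [lra|].
    apply psi_ratio_upper, Hc.
Qed.

Lemma psi_ratio_pow_le_real (alpha x : R) :
  Rpower (psi_ratio x) (alpha - 1) <= Rpower 2 ((1 - alpha + Rabs (1 - alpha)) / 2).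
Proof.
  assert (Hc : 0 < cos (Im x)) by (simpl; rewrite cos_0; lra).
  assert (Hy0 : Im x = 0) by reflexivity.
  pose proof (psi_ratio_num_pos x Hc) as Hx. pose proof (psi_ratio_den_pos x Hc) as Hy.
  unfold psi_ratio. destruct (Rlt_dec alpha 1) as [Ha|Ha].
  - rewrite Rabs_pos_eq by lra.
    replace ((1 - alpha + (1 - alpha)) / 2) with ((1 - alpha) / 2 + (1 - alpha) / 2) by field.
    rewrite Rpower_plus, Rpower_mult_distr by lra.
    replace (alpha - 1) with (- (1 - alpha)) by ring. rewrite Rpower_div_opp by assumption.
    apply Rpower_div_le_of_sq; try assumption; [lra|].
    replace (2 * 2) with 4 by ring. apply psi_ratio_lower_real; assumption.
  - rewrite Rabs_left1 by lra. replace ((1 - alpha + - (1 - alpha)) / 2) with 0 by field.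
    rewrite Rpower_O by lra.
    eapply Rle_trans; [apply (Rpower_div_le_of_sq _ _ 1); try assumption; [lra|]|].
    + rewrite Rmult_1_l. apply psi_ratio_upper_real; assumption.
    + unfold Rpower. rewrite ln_1, Rmult_0_r, exp_0. lra.
Qed.

(* [Z], [Y], [W], [S] stand for |z|, |1 + z|, |sinh z|, |cosh z| at z = psi zeta, and [a] for
   Re z. *)
Lemma F_bound_from_ratio (K alpha beta c a Z Y W S Fm : R) :
  0 < K -> 0 < beta -> 0 < Z -> 0 < Y -> 0 < W -> 0 < S -> S <= exp a ->
  Rpower (Z * S / (Y * W)) (alpha - 1) <= c ->
  Fm <= K * (Rpower (Z / Y) (alpha - 1) * exp (- (beta * a))) ->
  Fm * (W / S) <= c * K * Rpower (S ^ 2 / W ^ 2) (- alpha / 2) * Rpower (S ^ 2) (- beta / 2).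
Proof.
  intros HK Hb HZ HY HW HS HSa Hc HF.
  assert (Hc0 : 0 < c) by (eapply Rlt_le_trans; [apply exp_pos | exact Hc]).
  apply ln_le in Hc; [|apply exp_pos].
  rewrite ln_Rpower, ln_div, !ln_mult in Hc by (try apply Rmult_lt_0_compat; assumption).
  assert (HlnS : ln S <= a) by (rewrite <- (ln_exp a); apply ln_le; assumption).
  apply Rle_trans with (K * (Rpower (Z / Y) (alpha - 1) * exp (- (beta * a))) * (W / S)).
  { apply Rmult_le_compat_r; [left; apply Rdiv_lt_0_compat|]; assumption. }
  assert (HWS : W / S = exp (ln W - ln S))
    by (unfold Rminus; rewrite exp_plus, exp_Ropp, !exp_ln by assumption; reflexivity).
  unfold Rpower. rewrite HWS, !ln_div, !ln_pow by (try apply pow_lt; assumption).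
  replace (INR 2) with 2 by (simpl; ring). rewrite <- (exp_ln c Hc0).
  assert (Hexp : (alpha - 1) * (ln Z - ln Y) + - (beta * a) + (ln W - ln S) <=
                 ln c + - alpha / 2 * (2 * ln S - 2 * ln W) + - beta / 2 * (2 * ln S)) by nra.
  apply exp_le_exp in Hexp. rewrite !exp_plus in Hexp. nra.
Qed.

Lemma Re_opp_RtoC_mult (r : R) (z : C) : Re (- (RtoC r * z)) = - (r * Re z).
Proof. destruct z as [x y]. unfold Re. simpl. ring. Qed.

Lemma F_bound_at (K alpha beta c : R) (f : C -> C) (zeta : C) :
  0 < cos (Im zeta) -> 0 < K -> 0 < beta ->
  Cmod (f (psi zeta)) <=
    K * Cmod (Cpowp (psi zeta / (1 + psi zeta))%C (RtoC (alpha - 1))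
              * Cexp (- (RtoC beta * psi zeta)))%C ->
  Rpower (psi_ratio zeta) (alpha - 1) <= c ->
  Cmod (f (psi zeta) * dpsi zeta)%C <=
    c * K * Rpower (Cmod (1 + Cexp (- (2 * zeta)))%C) (- alpha / 2)
      * Rpower (Cmod (1 + Cexp (2 * zeta))%C) (- beta / 2).
Proof.
  intros Hc HK Hb Hf Hr. unfold psi_ratio in Hr.
  pose proof (Cmod_psi_pos zeta Hc). pose proof (Cmod_1_add_psi_pos zeta Hc).
  pose proof (Cmod_Csinh_psi_pos zeta Hc). pose proof (Cmod_Ccosh_psi_pos zeta Hc).
  pose proof (Cmod_Ccosh_le_exp (psi zeta) (Rlt_le _ _ (Re_psi_pos zeta Hc))).
  assert (Hq : (psi zeta / (1 + psi zeta))%C <> 0%C)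
    by (apply Cmod_gt_0; rewrite Cmod_div by (apply Cmod_gt_0; lra); apply Rdiv_lt_0_compat; lra).
  rewrite Cmod_mult, Cmod_Cpowp_real, Cmod_div, Cmod_Cexp, Re_opp_RtoC_mult in Hf
    by (first [assumption | apply Cmod_gt_0; assumption]).
  rewrite dpsi_eq, Cmod_1_add_Cexp_double, Cmod_1_add_Cexp_opp_double, Cmod_mult, Cmod_div
    by (first [assumption | apply Cmod_gt_0; assumption]).
  apply (F_bound_from_ratio K alpha beta c (Re (psi zeta)) (Cmod (psi zeta)) (Cmod (1 + psi zeta)));
    assumption.
Qed.

Lemma Cmod_1_add_Cexp_real (t : C) : Im t = 0 -> Cmod (1 + Cexp t) = 1 + exp (Re t).
Proof.
  intros Ht. replace (1 + Cexp t)%C with (RtoC (1 + exp (Re t))).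
  - rewrite Cmod_R. apply Rabs_pos_eq. pose proof (exp_pos (Re t)). lra.
  - unfold Cexp. rewrite Ht, cos_0, sin_0. apply C_ext; simpl; ring.
Qed.

Theorem lemma3 (d K alpha beta : R) (f : C -> C) :
  0 < d -> d < PI / 2 -> 0 < K -> 0 < alpha -> 0 < beta ->
  analytic_on (psi_strip d) f ->
  (forall z, psi_strip d z ->
     Cmod (f z) <=
       K * Cmod (Cpowp (z / (1 + z))%C (RtoC (alpha - 1))
                 * Cexp (- (RtoC beta * z)))%C) ->
  LSE (Rpower 2 (beta / 2) * c_const alpha d * K)
      (Rpower 2 ((1 - alpha + Rabs (1 - alpha)) / 2) * K)
      alpha beta d
      (fun zeta => (f (psi zeta) * dpsi zeta)%C).
Proof.
  intros Hd Hd2 HK Ha Hb Hf_an Hf_bd.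
  assert (Hf_at : forall zeta, strip d zeta -> Cmod (f (psi zeta)) <=
            K * Cmod (Cpowp (psi zeta / (1 + psi zeta))%C (RtoC (alpha - 1))
                      * Cexp (- (RtoC beta * psi zeta)))%C)
    by (intros zeta Hz; apply Hf_bd; exists zeta; auto).
  split; [|split].
  - apply analytic_on_F; [lra | exact Hf_an].
  - intros zeta Hz. pose proof (cos_Im_pos_of_strip d zeta (Rlt_le _ _ Hd2) Hz) as Hc.
    apply F_bound_at; auto.
    apply psi_ratio_pow_le_strip; auto; lra.
  - intros x. assert (Hx : strip d x) by (unfold strip; simpl; rewrite Rabs_R0; exact Hd).
    assert (E1 : 1 + exp (2 * x) = Cmod (1 + Cexp (2 * RtoC x)))
      by (rewrite Cmod_1_add_Cexp_real by (simpl; ring); do 2 f_equal; simpl; ring).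
    assert (E2 : 1 + exp (- (2 * x)) = Cmod (1 + Cexp (- (2 * RtoC x))))
      by (rewrite Cmod_1_add_Cexp_real by (simpl; ring); do 2 f_equal; simpl; ring).
    rewrite E1, E2. apply F_bound_at; auto.
    + simpl. rewrite cos_0. lra.
    + apply psi_ratio_pow_le_real.
Qed.
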